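(* Let $n\geq 3$, let $\alpha\in(1/2,1]$, and let $A$ and $B$ be two $n\times n$ generalized tournament matrices that are both $\alpha$-linear. Then there exists a clan $X$ of $A$ such that $\mathrm{Inv}(A,X)$ and $B$ have a common nontrivial clan.
   Context: A generalized tournament matrix of order $n$ is a real $n\times n$ matrix $M=(m_{ij})$ with nonnegative entries satisfying $M+M^{t}=J_n-I_n$. Write $[n]=\{1,\ldots,n\}$. A clan of $M$ is a subset $X\subseteq[n]$ such that for all $i,j\in X$ and $k\in[n]\setminus X$, $m_{ik}=m_{jk}$ and $m_{ki}=m_{kj}$; the empty set, singletons and $[n]$ are trivial clans. For $X\subseteq[n]$, $\mathrm{Inv}(M,X)$ is obtained from $M$ by replacing $m_{ij}$ by $m_{ji}$ for all $i,j\in X$. For $\alpha>1/2$, $M$ is $\alpha$-linear if there is an ordering $x_1,\ldots,x_n$ of $[n]$ such that $m_{x_ix_j}=\alpha$ whenever $i<j$. *)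

From HB Require Import structures.
From mathcomp Require Import all_boot all_order all_algebra all_fingroup.
Set Implicit Arguments. Unset Strict Implicit. Unset Printing Implicit Defensive.
Import Order.TTheory GRing.Theory Num.Theory.
Local Open Scope ring_scope.

Definition gen_tournament (R : realFieldType) (n : nat) (M : 'M[R]_n) : Prop :=
  (forall i j, 0 <= M i j) /\ M + M^T = const_mx 1 - 1%:M.

Definition clan (R : realFieldType) (n : nat) (M : 'M[R]_n) (X : {set 'I_n}) : Prop :=
  forall i j k, i \in X -> j \in X -> k \notin X -> M i k = M j k /\ M k i = M k j.

Definition trivial_set (n : nat) (X : {set 'I_n}) : bool :=
  [|| X == set0, #|X| == 1%N | X == setT].

Definition Inv (R : realFieldType) (n : nat) (M : 'M[R]_n) (X : {set 'I_n}) : 'M[R]_n :=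
  \matrix_(i, j) if (i \in X) && (j \in X) then M j i else M i j.

Definition alpha_linear (R : realFieldType) (n : nat) (alpha : R) (M : 'M[R]_n) : Prop :=
  1 / 2 < alpha /\ exists s : 'S_n, forall i j : 'I_n, (i < j)%N -> M (s i) (s j) = alpha.

(* Let x be the last vertex of the linear order of B; every other vertex
   dominates x, so [set~ x] is a clan of B.  In A, the final segment of the
   order starting at x is a clan, and inverting A on it moves x to the very end,
   so that x is dominated by every other vertex of Inv(A, X) as well. *)
From HB Require Import structures.
From mathcomp Require Import all_boot all_order all_algebra all_fingroup.
From mathcomp Require Import zify.
Set Implicit Arguments. Unset Strict Implicit.
Import Order.TTheory GRing.Theory Num.Theory.
Local Open Scope ring_scope.

Definition is_sink (R : realFieldType) (n : nat) (M : 'M[R]_n) (a : R) (x : 'I_n) :=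
  forall y, y != x -> M y x = a /\ M x y = 1 - a.

Lemma tournament_entryC (R : realFieldType) (n : nat) (M : 'M[R]_n) (i j : 'I_n) :
  gen_tournament M -> i != j -> M j i = 1 - M i j.
Proof.
case=> _ /(congr1 (fun N : 'M[R]_n => N i j)); rewrite !mxE => sumM /negbTE neq_ij.
by rewrite neq_ij subr0 in sumM; rewrite -sumM addrC addrK.
Qed.

Lemma sink_clan_setC1 (R : realFieldType) (n : nat) (M : 'M[R]_n) (a : R) (x : 'I_n) :
  is_sink M a x -> clan M [set~ x].
Proof.
move=> sink_x i j k; rewrite !in_setC1 negbK => /sink_x[M_ix M_xi] /sink_x[M_jx M_xj].
by move/eqP->; rewrite M_ix M_xi M_jx M_xj.
Qed.

Lemma setC1_nontrivial (n : nat) (x : 'I_n) : (3 <= n)%N -> ~~ trivial_set [set~ x].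
Proof.
move=> n_ge3; rewrite /trivial_set -cards_eq0 cardsC1 card_ord.
apply/or3P; case=> [/eqP|/eqP|/eqP/setP/(_ x)]; last by rewrite !inE eqxx.
all: lia.
Qed.

Section LinearOrder.

Variables (R : realFieldType) (n : nat) (alpha : R) (M : 'M[R]_n) (s : 'S_n).
Hypothesis tourM : gen_tournament M.
Hypothesis linM : forall i j : 'I_n, (i < j)%N -> M (s i) (s j) = alpha.

Local Notation rank := (s^-1)%g.

Lemma rank_neq (y z : 'I_n) : y != z -> (rank y : nat) != rank z.
Proof. by apply: contra_neq => /val_inj/perm_inj. Qed.

Lemma linear_entries {y z : 'I_n} :
  (rank y < rank z)%N -> M y z = alpha /\ M z y = 1 - alpha.
Proof.
move=> lt_yz; have M_yz : M y z = alpha by rewrite -[y](permKV s) -[z](permKV s) linM.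
split=> //; rewrite (tournament_entryC tourM) ?M_yz //.
by apply: contraTneq lt_yz => ->; rewrite ltnn.
Qed.

Lemma clan_rank_suffix (r : nat) : clan M [set y | (r <= rank y)%N].
Proof.
move=> i j k; rewrite !inE -ltnNge => le_ri le_rj lt_kr.
have [-> ->] := linear_entries (leq_trans lt_kr le_ri).
by have [-> ->] := linear_entries (leq_trans lt_kr le_rj).
Qed.

Lemma Inv_rank_suffix_sink (x : 'I_n) :
  is_sink (Inv M [set y | (rank x <= rank y)%N]) alpha x.
Proof.
move=> y neq_yx; rewrite !mxE !inE leqnn andbT andTb.
case: leqP => [le_xy | lt_yx]; last exact: linear_entries.
have lt_xy : (rank x < rank y)%N by rewrite ltn_neqAle le_xy rank_neq // eq_sym.
by have [-> ->] := linear_entries lt_xy.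
Qed.

Lemma rank_max_sink (x : 'I_n) :
  (forall y, (rank y <= rank x)%N) -> is_sink M alpha x.
Proof.
move=> max_x y neq_yx; apply: linear_entries.
by rewrite ltn_neqAle max_x rank_neq.
Qed.

End LinearOrder.

Theorem proposition5p3 (R : realFieldType) (n : nat) (alpha : R)
    (A B : 'M[R]_n) :
  (3 <= n)%N -> 1 / 2 < alpha -> alpha <= 1 ->
  gen_tournament A -> gen_tournament B ->
  alpha_linear alpha A -> alpha_linear alpha B ->
  exists X : {set 'I_n}, clan A X /\
    exists Y : {set 'I_n}, ~~ trivial_set Y /\ clan (Inv A X) Y /\ clan B Y.
Proof.
move=> n_ge3 _ _ tourA tourB [_ [s linA]] [_ [t linB]].
have lt_last : (n.-1 < n)%N by rewrite ltn_predL (leq_trans _ n_ge3).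
pose x := t (Ordinal lt_last).
exists [set y | ((s^-1)%g x <= (s^-1)%g y)%N].
split; first exact: (clan_rank_suffix tourA linA).
exists [set~ x]; split; first exact: setC1_nontrivial.
split; apply: sink_clan_setC1.
- exact: (Inv_rank_suffix_sink tourA linA).
- apply: (rank_max_sink tourB linB) => y.
  by rewrite /x permK /= -ltnS prednK ?ltn_ord // (leq_trans _ n_ge3).
Qed.
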